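(* Let $A$ be an $n\times n$ Bott matrix, $M=M(A)$ and $\Gamma=\pi_1(M)$. Then $H^1(\Gamma,\mathbb{Z})\cong\mathbb{Z}^{b_1}$, where $b_1$ is the first Betti number of $M$. Moreover, $b_1$ equals the number of zero columns of $A$.
   Context: A Bott matrix is a strictly upper triangular matrix $A=[a_{ij}]\in\mathbb{F}_2^{n\times n}$. The group $C_2^n=\langle c_1,\dots,c_n\rangle$ acts freely on $T^n=(S^1)^n\subset\mathbb{C}^n$ by $$c_i\cdot(z_1,\dots,z_n)=(z_1,\dots,z_{i-1},-z_i,c_{i,i+1}(z_{i+1}),\dots,c_{i,n}(z_n)),$$ with $c_{i,j}(z)=z$ if $a_{ij}=0$ and $c_{i,j}(z)=\bar z$ if $a_{ij}=1$. The real Bott manifold is $M(A)=T^n/C_2^n$. *)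

From Stdlib Require Import Reals.
From mathcomp Require Import all_boot all_order all_algebra.

Set Implicit Arguments.
Unset Strict Implicit.
Unset Printing Implicit Defensive.

Import GRing.Theory.
Local Open Scope ring_scope.

Definition bott_matrix (n : nat) (A : 'M['F_2]_n) : Prop :=
  forall i j : 'I_n, (j <= i)%N -> A i j = 0.

(* Points of the universal cover R^n of T^n (coordinate x_j <-> z_j = exp(2 pi i x_j)). *)
Definition vecR (n : nat) := 'I_n -> R.

(* Lift of c_i to R^n: z_i -> -z_i becomes x_i -> x_i + 1/2,
   z_j -> conj z_j (a_ij = 1, j > i) becomes x_j -> -x_j. *)
Definition bott_lift (n : nat) (A : 'M['F_2]_n) (i : 'I_n) (x : vecR n) : vecR n :=
  fun j => if (j < i)%N then x j
           else if j == i then Rplus (x j) (Rinv (Rplus R1 R1))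
           else if A i j == 1 then Ropp (x j) else x j.

Definition transl (n : nat) (j : 'I_n) (b : bool) (x : vecR n) : vecR n :=
  fun k => if k == j then (if b then Rplus (x k) R1 else Rminus (x k) R1) else x k.

Definition bott_lift_inv (n : nat) (A : 'M['F_2]_n) (i : 'I_n) (x : vecR n) : vecR n :=
  fun j => if (j < i)%N then x j
           else if j == i then Rminus (x j) (Rinv (Rplus R1 R1))
           else if A i j == 1 then Ropp (x j) else x j.

(* Gamma = pi_1(M(A)), realised as the group of all lifts to the universal cover
   R^n of the deck transformations of T^n -> T^n/C_2^n = M(A): the subgroup of
   bijections of R^n generated by the translations Z^n and the lifts of the c_i. *)
Inductive bott_group (n : nat) (A : 'M['F_2]_n) : (vecR n -> vecR n) -> Prop :=
  | bg_id : bott_group A id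
  | bg_transl (j : 'I_n) (b : bool) : bott_group A (transl j b)
  | bg_lift (i : 'I_n) : bott_group A (bott_lift A i)
  | bg_lift_inv (i : 'I_n) : bott_group A (bott_lift_inv A i)
  | bg_comp g h : bott_group A g -> bott_group A h -> bott_group A (g \o h).

(* Group homomorphisms Gamma -> G into an additive abelian group G
   (G = Z gives H^1(Gamma, Z) = Hom(Gamma, Z), trivial coefficients). *)
Definition is_hom (n : nat) (A : 'M['F_2]_n) (G : zmodType)
    (phi : (vecR n -> vecR n) -> G) : Prop :=
  forall g h, bott_group A g -> bott_group A h -> phi (g \o h) = phi g + phi h.

Definition H1Z_iso_Zpow (n : nat) (A : 'M['F_2]_n) (k : nat) : Prop :=
  exists F : 'rV[int]_k -> (vecR n -> vecR n) -> int,
    [/\ forall v, is_hom A (F v),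
        forall u v g, bott_group A g -> F (u + v) g = F u g + F v g,
        forall v, (forall g, bott_group A g -> F v g = 0) -> v = 0
      & forall phi, is_hom A phi ->
          exists v, forall g, bott_group A g -> F v g = phi g].

(* First Betti number: b_1(M) = dim_Q H^1(M; Q) = dim_Q Hom(pi_1 M, Q).
   is_betti1 A k : Hom(Gamma, Q) is isomorphic to Q^k as a Q-vector space. *)
Definition is_betti1 (n : nat) (A : 'M['F_2]_n) (k : nat) : Prop :=
  exists F : 'rV[rat]_k -> (vecR n -> vecR n) -> rat,
    [/\ forall v, is_hom A (F v),
        forall (a : rat) u v g, bott_group A g ->
          F (a *: u + v) g = a * F u g + F v g,
        forall v, (forall g, bott_group A g -> F v g = 0) -> v = 0
      & forall phi, is_hom A phi ->
          exists v, forall g, bott_group A g -> F v g = phi g].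

Definition zero_columns (n : nat) (A : 'M['F_2]_n) : nat :=
  #|[set j : 'I_n | [forall i : 'I_n, A i j == 0]]|.

(* Gamma is generated by the lifts s_i of the c_i, the translations being s_j^2
   and their inverses, so a homomorphism phi from Gamma to a torsion-free abelian
   group is determined by the values phi(s_i).  If column i of A is nonzero, say
   a_ki = 1 with k < i, then s_k s_i = s_i^-1 s_k, whence 2 phi(s_i) = 0 and
   phi(s_i) = 0.  If column j is zero, no element of Gamma reflects the j-th
   coordinate, so each g translates it by h_j(g)/2 with h_j(g) an integer; h_j is
   a homomorphism Gamma -> Z with h_j(s_i) = delta_ij.  Hence v |-> sum_j v_j h_j
   identifies G^(number of zero columns) with Hom(Gamma, G), for G = Z and G = Q. *)

From Stdlib Require Import Reals.
From mathcomp Require Import all_boot all_order all_algebra.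
From Stdlib Require Import FunctionalExtensionality.
From mathcomp Require Import Rstruct lra.

Set Implicit Arguments.
Unset Strict Implicit.
Unset Printing Implicit Defensive.
Import GRing.Theory Num.Theory.
Local Open Scope ring_scope.

Lemma RoneE : R1 = 1. Proof. by []. Qed.

Lemma RhalfE : Rinv (Rplus R1 R1) = 2^-1. Proof. by []. Qed.

Ltac compare_index k i :=
  let h := fresh in
  case: (ssrnat.ltngtP k i) => h;
  [ rewrite ?(ltn_eqF h : (k == i) = false)
  | rewrite ?(gtn_eqF h : (k == i) = false)
  | move/val_inj: h => h; subst k; rewrite ?eqxx ].

Ltac pointwise_lra :=
  rewrite /= ?RhalfE ?RplusE ?RminusE ?RoppE ?RoneE;
  repeat match goal with |- context[if ?b then _ else _] => case: b end;
  lra.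

Section BottRelations.
Variables (n : nat) (A : 'M['F_2]_n).

Lemma lift_lift_transl (i : 'I_n) : bott_lift A i \o bott_lift A i = transl i true.
Proof.
apply: functional_extensionality => x; apply: functional_extensionality => k.
rewrite /transl /bott_lift /=; compare_index k i; pointwise_lra.
Qed.

Lemma transl_falseK (j : 'I_n) : transl j false \o transl j true = id.
Proof.
apply: functional_extensionality => x; apply: functional_extensionality => k.
rewrite /transl /=; case: (k == j); pointwise_lra.
Qed.

Lemma lift_invK (i : 'I_n) : bott_lift_inv A i \o bott_lift A i = id.
Proof.
apply: functional_extensionality => x; apply: functional_extensionality => k.
rewrite /bott_lift_inv /bott_lift /=; compare_index k i; pointwise_lra.
Qed.

Lemma lift_lift_twisted (i0 i : 'I_n) : (i0 < i)%N -> A i0 i = 1 ->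
  bott_lift A i0 \o bott_lift A i = bott_lift_inv A i \o bott_lift A i0.
Proof.
move=> lt_i0i Ai0i.
apply: functional_extensionality => x; apply: functional_extensionality => k.
rewrite /bott_lift_inv /bott_lift /=.
case: (ssrnat.ltngtP k i0) => [lt_ki0|lt_i0k|/val_inj->].
- by rewrite (ltn_trans lt_ki0 lt_i0i).
- rewrite (gtn_eqF lt_i0k : (k == i0) = false).
  compare_index k i; rewrite ?Ai0i; pointwise_lra.
- rewrite lt_i0i eqxx; pointwise_lra.
Qed.

End BottRelations.

Section Homomorphisms.
Variables (n : nat) (A : 'M['F_2]_n).

Definition zero_cols : {set 'I_n} := [set j | [forall i, A i j == 0]].

Lemma zero_colsP (j : 'I_n) : reflect (forall i, A i j = 0) (j \in zero_cols).
Proof. by rewrite inE; apply: (iffP forallP) => Aj i; apply/eqP. Qed.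

Lemma hom_id (G : zmodType) (phi : (vecR n -> vecR n) -> G) :
  is_hom A phi -> phi id = 0.
Proof.
move=> phi_hom; apply: (@addrI _ (phi id)).
by rewrite addr0 -phi_hom //; exact: bg_id.
Qed.

Lemma hom_inv (G : zmodType) (phi : (vecR n -> vecR n) -> G) g h :
  is_hom A phi -> bott_group A g -> bott_group A h -> g \o h = id ->
  phi g = - phi h.
Proof.
move=> phi_hom Gg Gh gK; apply/eqP; rewrite -addr_eq0.
by rewrite -phi_hom // gK hom_id.
Qed.

Lemma hom_eq_on_lifts (G : zmodType) (phi psi : (vecR n -> vecR n) -> G) :
  is_hom A phi -> is_hom A psi ->
  (forall i, phi (bott_lift A i) = psi (bott_lift A i)) ->
  forall g, bott_group A g -> phi g = psi g.
Proof.
move=> phi_hom psi_hom eq_lift g; elim=> {g} [|j b|i|i|g h Gg IHg Gh IHh].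
- by rewrite !hom_id.
- have eq_transl : phi (transl j true) = psi (transl j true).
    by rewrite -(lift_lift_transl A) phi_hom ?psi_hom ?eq_lift //; exact: bg_lift.
  case: b => //.
  by rewrite !(hom_inv _ (bg_transl A j false) (bg_transl A j true) (transl_falseK j))
    ?eq_transl.
- exact: eq_lift.
- by rewrite !(hom_inv _ (bg_lift_inv A i) (bg_lift A i) (lift_invK A i)) ?eq_lift.
- by rewrite phi_hom // psi_hom // IHg IHh.
Qed.

Lemma hom_lift_nonzero_col (G : numDomainType) (phi : (vecR n -> vecR n) -> G) i :
  bott_matrix A -> is_hom A phi -> i \notin zero_cols -> phi (bott_lift A i) = 0.
Proof.
move=> bottA phi_hom; rewrite inE negb_forall => /existsP[i0 Ai0i_neq0].
have Ai0i : A i0 i = 1 by apply/eqP; move: (A i0 i) Ai0i_neq0 => [[|[|]]].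
have lt_i0i : (i0 < i)%N by rewrite ltnNge; apply: contraNN Ai0i_neq0 => /bottA ->.
have [Gi0 Gi Gi'] := And3 (bg_lift A i0) (bg_lift A i) (bg_lift_inv A i).
have := phi_hom _ _ Gi0 Gi.
rewrite lift_lift_twisted // phi_hom // (hom_inv phi_hom Gi' Gi (lift_invK A i)) addrC.
by move/addrI/eqP; rewrite eq_sym -addr_eq0 -mulr2n mulrn_eq0 => /eqP.
Qed.

End Homomorphisms.

Section HalfShift.
Variables (n : nat) (A : 'M['F_2]_n) (j : 'I_n).
Hypothesis zero_col_j : j \in zero_cols A.

(* For g in Gamma, 2 * g 0 j is an integer; floor only casts it to int. *)
Definition half_shift (g : vecR n -> vecR n) : int := Num.floor (2 * g (fun=> 0) j).

Lemma half_shift_eq g (m : int) :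
  (forall x, g x j = x j + m%:~R / 2) -> half_shift g = m.
Proof.
by move=> gj; rewrite /half_shift gj add0r mulrC divfK ?intrKfloor ?pnatr_eq0.
Qed.

Lemma bott_lift_zero_col i x : bott_lift A i x j = x j + (i == j)%:Z%:~R / 2.
Proof.
have /zero_colsP Aj := zero_col_j.
rewrite /bott_lift Aj [i == j]eq_sym; compare_index j i; pointwise_lra.
Qed.

Lemma bott_lift_inv_zero_col i x : bott_lift_inv A i x j = x j - (i == j)%:Z%:~R / 2.
Proof.
have /zero_colsP Aj := zero_col_j.
rewrite /bott_lift_inv Aj [i == j]eq_sym; compare_index j i; pointwise_lra.
Qed.

Lemma bott_group_half_shift g : bott_group A g ->
  exists m : int, forall x, g x j = x j + m%:~R / 2.
Proof.
elim=> {g} [|k b|i|i|g h _ [mg gj] _ [mh hj]].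
- by exists 0 => x; rewrite mul0r addr0.
- exists (if j == k then (if b then 2 else -2) else 0) => x.
  rewrite /transl; case: (j == k); [case: b|]; pointwise_lra.
- by exists (i == j)%:Z; exact: bott_lift_zero_col.
- exists (- (i == j)%:Z) => x.
  by rewrite bott_lift_inv_zero_col intrN mulNr.
- by exists (mg + mh) => x; rewrite /= gj hj intrD; lra.
Qed.

Lemma half_shiftP g : bott_group A g -> forall x, g x j = x j + (half_shift g)%:~R / 2.
Proof. by move=> /bott_group_half_shift[m gj]; rewrite (half_shift_eq gj). Qed.

Lemma half_shift_comp g h : bott_group A g -> bott_group A h ->
  half_shift (g \o h) = half_shift g + half_shift h.
Proof.
move=> Gg Gh; apply: half_shift_eq => x.
by rewrite /= (half_shiftP Gg) (half_shiftP Gh) intrD; lra.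
Qed.

Lemma half_shift_lift i : half_shift (bott_lift A i) = (i == j)%:Z.
Proof.
by apply: half_shift_eq; exact: bott_lift_zero_col.
Qed.

End HalfShift.

Section HomOfRow.
Variables (n : nat) (A : 'M['F_2]_n) (G : numDomainType).

Definition hom_of_row (v : 'rV[G]_#|zero_cols A|) (g : vecR n -> vecR n) : G :=
  \sum_l v 0 l * (half_shift (enum_val l) g)%:~R.

Let enum_zero_col (l : 'I_#|zero_cols A|) : enum_val l \in zero_cols A :=
  enum_valP l.

Lemma hom_of_row_is_hom v : is_hom A (hom_of_row v).
Proof.
move=> g h Gg Gh; rewrite /hom_of_row -big_split; apply: eq_bigr => l _.
by rewrite (half_shift_comp (enum_zero_col l) Gg Gh) intrD mulrDr.
Qed.

Lemma hom_of_row_linear a u v g :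
  hom_of_row (a *: u + v) g = a * hom_of_row u g + hom_of_row v g.
Proof.
rewrite /hom_of_row mulr_sumr -big_split; apply: eq_bigr => l _.
by rewrite !mxE mulrDl mulrA.
Qed.

Lemma hom_of_row_lift v l : hom_of_row v (bott_lift A (enum_val l)) = v 0 l.
Proof.
rewrite /hom_of_row (bigD1 l) //= big1 => [|l' neq_l'l].
  by rewrite (half_shift_lift (enum_zero_col _)) eqxx mulr1 addr0.
rewrite (half_shift_lift (enum_zero_col _)) (inj_eq enum_val_inj) eq_sym.
by rewrite (negbTE neq_l'l) mulr0.
Qed.

Lemma hom_of_row_lift_nonzero_col v i :
  i \notin zero_cols A -> hom_of_row v (bott_lift A i) = 0.
Proof.
move=> nzi; rewrite /hom_of_row big1 // => l _.
rewrite (half_shift_lift (enum_zero_col _)).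
by case: eqP => [i_eq | _]; [move: nzi; rewrite i_eq enum_zero_col | rewrite mulr0].
Qed.

Lemma hom_of_row_inj v : (forall g, bott_group A g -> hom_of_row v g = 0) -> v = 0.
Proof.
by move=> v0; apply/rowP => l; rewrite mxE -hom_of_row_lift v0 //; exact: bg_lift.
Qed.

Lemma hom_of_row_surj (phi : (vecR n -> vecR n) -> G) :
  bott_matrix A -> is_hom A phi ->
  exists v, forall g, bott_group A g -> hom_of_row v g = phi g.
Proof.
move=> bottA phi_hom; exists (\row_l phi (bott_lift A (enum_val l))).
apply: (hom_eq_on_lifts (hom_of_row_is_hom _) phi_hom) => i.
have [zi | nzi] := boolP (i \in zero_cols A).
  by rewrite -(enum_rankK_in zi zi) hom_of_row_lift mxE.
by rewrite hom_of_row_lift_nonzero_col // hom_lift_nonzero_col.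
Qed.

End HomOfRow.

Theorem mainTheorem4 (n : nat) (A : 'M['F_2]_n) :
  bott_matrix A ->
  exists b1 : nat,
    [/\ is_betti1 A b1, H1Z_iso_Zpow A b1 & b1 = zero_columns A].
Proof.
move=> bottA; exists #|zero_cols A|; split=> //.
- exists (@hom_of_row n A rat); split.
  + exact: hom_of_row_is_hom.
  + by move=> a u v g _; exact: hom_of_row_linear.
  + exact: hom_of_row_inj.
  + by move=> phi; exact: hom_of_row_surj.
- exists (@hom_of_row n A int); split.
  + exact: hom_of_row_is_hom.
  + by move=> u v g _; rewrite -[u]scale1r hom_of_row_linear mul1r scale1r.
  + exact: hom_of_row_inj.
  + by move=> phi; exact: hom_of_row_surj.
Qed.
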